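(* Let $\mathcal D$ be a semicartesian symmetric monoidal category and $X$ an object. The following are equivalent: (1) $X$ admits broadcasting, i.e. there is a morphism $b_X\colon X\to X\otimes X$ with $(\mathrm{id}_X\otimes\mathrm{del}_X)\circ b_X=\mathrm{id}_X$ and $(\mathrm{del}_X\otimes\mathrm{id}_X)\circ b_X=\mathrm{id}_X$. (2) The discard morphism $\mathrm{del}_X\colon X\to I$ is non-creative.
   Context: A symmetric monoidal category $(\mathcal D,\otimes,I)$ is semicartesian if $I$ is terminal; $\mathrm{del}_X\colon X\to I$ denotes the unique morphism (unitors suppressed). A dilation of $p\colon A\to X$ is a morphism $\pi\colon A\to X\otimes E$ (for some object $E$) with $(\mathrm{id}_X\otimes\mathrm{del}_E)\circ\pi=p$. A morphism $p\colon A\to X$ is non-creative if every dilation $\pi\colon A\to X\otimes E$ of $p$ equals $(p\otimes\mathrm{id}_E)\circ\iota$ for some dilation $\iota\colon A\to A\otimes E$ of $\mathrm{id}_A$. *)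

Set Implicit Arguments.
Unset Strict Implicit.

Declare Scope cat_scope.
Local Open Scope cat_scope.

Record SymMonCat := {
  Ob :> Type;
  Hom : Ob -> Ob -> Type;
  idm : forall A, Hom A A;
  comp : forall A B C, Hom B C -> Hom A B -> Hom A C;
  comp_id_l : forall A B (f : Hom A B), comp (idm B) f = f;
  comp_id_r : forall A B (f : Hom A B), comp f (idm A) = f;
  comp_assoc : forall A B C D (h : Hom C D) (g : Hom B C) (f : Hom A B),
      comp h (comp g f) = comp (comp h g) f;

  tens : Ob -> Ob -> Ob;
  tensm : forall A B C D, Hom A B -> Hom C D -> Hom (tens A C) (tens B D);
  tensm_id : forall A B, tensm (idm A) (idm B) = idm (tens A B);
  tensm_comp : forall A B C A' B' C' (g : Hom B C) (f : Hom A B)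
      (g' : Hom B' C') (f' : Hom A' B'),
      tensm (comp g f) (comp g' f') = comp (tensm g g') (tensm f f');

  unit : Ob;

  assoc : forall A B C, Hom (tens (tens A B) C) (tens A (tens B C));
  assoc_inv : forall A B C, Hom (tens A (tens B C)) (tens (tens A B) C);
  assoc_iso1 : forall A B C, comp (assoc_inv A B C) (assoc A B C) = idm _;
  assoc_iso2 : forall A B C, comp (assoc A B C) (assoc_inv A B C) = idm _;
  assoc_nat : forall A A' B B' C C' (f : Hom A A') (g : Hom B B') (h : Hom C C'),
      comp (assoc A' B' C') (tensm (tensm f g) h)
      = comp (tensm f (tensm g h)) (assoc A B C);

  lunit : forall A, Hom (tens unit A) A;
  lunit_inv : forall A, Hom A (tens unit A);
  lunit_iso1 : forall A, comp (lunit_inv A) (lunit A) = idm _;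
  lunit_iso2 : forall A, comp (lunit A) (lunit_inv A) = idm _;
  lunit_nat : forall A B (f : Hom A B),
      comp (lunit B) (tensm (idm unit) f) = comp f (lunit A);

  runit : forall A, Hom (tens A unit) A;
  runit_inv : forall A, Hom A (tens A unit);
  runit_iso1 : forall A, comp (runit_inv A) (runit A) = idm _;
  runit_iso2 : forall A, comp (runit A) (runit_inv A) = idm _;
  runit_nat : forall A B (f : Hom A B),
      comp (runit B) (tensm f (idm unit)) = comp f (runit A);

  braid : forall A B, Hom (tens A B) (tens B A);
  braid_nat : forall A A' B B' (f : Hom A A') (g : Hom B B'),
      comp (braid A' B') (tensm f g) = comp (tensm g f) (braid A B);
  braid_invol : forall A B, comp (braid B A) (braid A B) = idm _;

  pentagon : forall A B C D,
      comp (assoc A B (tens C D)) (assoc (tens A B) C D)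
      = comp (tensm (idm A) (assoc B C D))
             (comp (assoc A (tens B C) D) (tensm (assoc A B C) (idm D)));
  triangle : forall A B,
      comp (tensm (idm A) (lunit B)) (assoc A unit B)
      = tensm (runit A) (idm B);
  hexagon : forall A B C,
      comp (assoc B C A) (comp (braid A (tens B C)) (assoc A B C))
      = comp (tensm (idm B) (braid A C))
             (comp (assoc B A C) (tensm (braid A B) (idm C)))
}.

Arguments idm {s} A.
Arguments comp {s A B C} g f.
Arguments tens {s} A B.
Arguments tensm {s A B C D} f g.
Arguments unit {s}.
Arguments lunit {s} A.
Arguments lunit_inv {s} A.
Arguments runit {s} A.
Arguments runit_inv {s} A.

Notation "g \o f" := (comp g f) (at level 40, left associativity) : cat_scope.
Notation "A (x) B" := (tens A B) (at level 35, right associativity) : cat_scope.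
Notation "f <x> g" := (tensm f g) (at level 35, right associativity) : cat_scope.

Record SemicartesianSMC := {
  smc :> SymMonCat;
  del : forall A : Ob smc, Hom A unit;
  del_unique : forall (A : Ob smc) (f : Hom A unit), f = del A
}.

Arguments del {s} A : rename.

Section Defs.
Variable D : SemicartesianSMC.

(** pi : A -> X (x) E is a dilation of p : A -> X
    (the suppressed right unitor X (x) I ~ X is made explicit). *)
Definition is_dilation (A X E : Ob D) (p : Hom A X) (pi : Hom A (X (x) E)) : Prop :=
  runit X \o ((idm X <x> del E) \o pi) = p.

Definition non_creative (A X : Ob D) (p : Hom A X) : Prop :=
  forall (E : Ob D) (pi : Hom A (X (x) E)),
    is_dilation p pi ->
    exists iota : Hom A (A (x) E),
      is_dilation (idm A) iota /\ pi = (p <x> idm E) \o iota.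

(** X admits broadcasting (unitors made explicit). *)
Definition admits_broadcasting (X : Ob D) : Prop :=
  exists b : Hom X (X (x) X),
    runit X \o ((idm X <x> del X) \o b) = idm X /\
    lunit X \o ((del X <x> idm X) \o b) = idm X.
End Defs.

Local Open Scope cat_scope.

(* Since I is terminal, every morphism A -> I (x) E is a dilation of del_A, and
   non-creativity of del_X says that each such morphism factors as
   (del_X (x) id) o iota through a dilation iota of id_X.  For pi = lambda^-1,
   the factorization iota is exactly a broadcasting map.  Conversely, a
   broadcasting map b satisfies (del_X (x) id) o b = lambda^-1, so
   iota := (id_X (x) lambda o pi) o b factors any pi by naturality of lambda. *)

Section Broadcasting.
Variable D : SemicartesianSMC.

Lemma hom_unit_eq {A : Ob D} (f g : Hom A unit) : f = g.
Proof. now rewrite (del_unique f), (del_unique g). Qed.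

Lemma is_dilation_del (A E : Ob D) (pi : Hom A (unit (x) E)) :
  is_dilation (del A) pi.
Proof. apply hom_unit_eq. Qed.

Lemma is_dilation_tensm_idl (A X E F : Ob D) (p : Hom A X)
    (pi : Hom A (X (x) E)) (k : Hom E F) :
  is_dilation p pi -> is_dilation p ((idm X <x> k) \o pi).
Proof.
  unfold is_dilation; intros <-.
  rewrite (comp_assoc (idm X <x> del F)), <- tensm_comp, comp_id_l.
  now rewrite (hom_unit_eq (del F \o k) (del E)).
Qed.

Lemma tensm_interchange (A A' B B' : Ob D) (f : Hom A B) (g : Hom A' B') :
  (f <x> idm B') \o (idm A <x> g) = (idm B <x> g) \o (f <x> idm A').
Proof. now rewrite <- !tensm_comp, !comp_id_l, !comp_id_r. Qed.

Lemma lunit_inv_nat (A B : Ob D) (f : Hom A B) :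
  lunit_inv B \o f = (idm unit <x> f) \o lunit_inv A.
Proof.
  rewrite <- (comp_id_l (_ \o lunit_inv A)), <- (lunit_iso1 B).
  rewrite <- comp_assoc, (comp_assoc (lunit B)), lunit_nat.
  now rewrite <- !comp_assoc, lunit_iso2, comp_id_r.
Qed.

Lemma lunit_comp_eq (A B : Ob D) (f : Hom B (unit (x) A)) (g : Hom B A) :
  lunit A \o f = g <-> f = lunit_inv A \o g.
Proof.
  split.
  - intros <-; now rewrite comp_assoc, lunit_iso1, comp_id_l.
  - intros ->; now rewrite comp_assoc, lunit_iso2, comp_id_l.
Qed.

Lemma admits_broadcastingE (X : Ob D) :
  admits_broadcasting X <->
  exists b : Hom X (X (x) X),
    is_dilation (idm X) b /\ (del X <x> idm X) \o b = lunit_inv X.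
Proof.
  unfold admits_broadcasting, is_dilation.
  split; intros [b [Hr Hl]]; exists b; split; trivial.
  - now apply lunit_comp_eq in Hl; rewrite comp_id_r in Hl.
  - now apply lunit_comp_eq; rewrite comp_id_r.
Qed.

Lemma broadcasting_non_creative_del (X : Ob D) :
  admits_broadcasting X -> non_creative (del X).
Proof.
  intros HX E pi _.
  destruct (proj1 (admits_broadcastingE X) HX) as [b [Hb Hdel]].
  exists ((idm X <x> (lunit E \o pi)) \o b); split.
  - now apply is_dilation_tensm_idl.
  - rewrite comp_assoc, tensm_interchange, <- comp_assoc, Hdel.
    rewrite <- lunit_inv_nat, comp_assoc, lunit_iso1.
    now rewrite comp_id_l.
Qed.

Lemma non_creative_del_broadcasting (X : Ob D) :
  non_creative (del X) -> admits_broadcasting X.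
Proof.
  intros HX; apply admits_broadcastingE.
  destruct (HX X (lunit_inv X) (is_dilation_del _ _ _)) as [b [Hb Hdel]].
  now exists b.
Qed.

End Broadcasting.

Theorem proposition4p18 (D : SemicartesianSMC) (X : Ob D) :
  admits_broadcasting X <-> non_creative (del X).
Proof.
  split.
  - apply broadcasting_non_creative_del.
  - apply non_creative_del_broadcasting.
Qed.
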